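(* Let $(A,\alpha)$ be an $I$-Galois object for a Hopf algebra $(H,\Delta)$ with invariant functionals, and $i,j\in I$. Then either $A_{ij}=A_{ji}=0$, or $(A_{ij},A_{ji})$ (with the multiplication of $A$) is a strict $H$-equivariant Morita context between $A_{ii}$ and $A_{jj}$.
   Context: $H$ has invariant functionals: nonzero $\varphi,\psi:H\to k$ with $(\mathrm{id}\otimes\varphi)\Delta(h)=\varphi(h)1$, $(\psi\otimes\mathrm{id})\Delta(h)=\psi(h)1$. An $I$-Galois object is a right $H$-comodule algebra $(A,\alpha)$ (possibly non-unital) whose Galois map $A\otimes_{A^\alpha}A\to A\otimes H$, $a\otimes b\mapsto(a\otimes1)\alpha(b)$, is bijective and whose coinvariant algebra $A^\alpha$ is identified with $k_I=\bigoplus_{i\in I}k$, with minimal idempotents $p_i$; $A_{ij}=p_iAp_j$, and $\alpha$ restricts to each $A_{ij}$. An $H$-equivariant Morita context between comodule algebras $A_{11},A_{22}$ is a Morita context $\{A_{ij}\}$ (associative multiplications $A_{ij}\times A_{jl}\to A_{il}$) in which all $A_{ij}$ are comodules and multiplications are comodule maps; strict if all maps $A_{ij}\otimes_{A_{jj}}A_{ji}\to A_{ii}$ are isomorphisms. *)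

(* Tensor products of (possibly infinite-dimensional)
   vector spaces are not in MathComp: they are represented by their universal
   property (a tensor product is *any* bilinear map with the universal property;
   all notions below are invariant under the choice). *)
From HB Require Import structures.
From mathcomp Require Import all_boot all_order all_algebra.
From Stdlib Require Import ClassicalEpsilon.
Set Implicit Arguments.
Unset Strict Implicit.
Unset Printing Implicit Defensive.
Import GRing.Theory.
Local Open Scope ring_scope.

Section Defs.
Variable k : fieldType.

Definition lin (U V : lmodType k) (f : U -> V) : Prop :=
  forall (c : k) (x y : U), f (c *: x + y) = c *: f x + f y.

Definition linf (U : lmodType k) (f : U -> k) : Prop :=
  forall (c : k) (x y : U), f (c *: x + y) = c * f x + f y.

Definition bilin (U V W : lmodType k) (b : U -> V -> W) : Prop :=
  (forall u, lin (b u)) /\ (forall v, lin (fun u => b u v)).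

Definition trilin (U V W Z : lmodType k) (b : U -> V -> W -> Z) : Prop :=
  (forall u v, lin (b u v)) /\ (forall u w, lin (fun v => b u v w)) /\
  (forall v w, lin (fun u => b u v w)).

Definition is_tensor (U V T : lmodType k) (t : U -> V -> T) : Prop :=
  bilin t /\
  forall (X : lmodType k) (b : U -> V -> X), bilin b ->
    exists f : T -> X, [/\ lin f, (forall u v, f (t u v) = b u v) &
      forall g : T -> X, lin g -> (forall u v, g (t u v) = b u v) -> g =1 f].

Definition is_tensor3 (U V W T : lmodType k) (t : U -> V -> W -> T) : Prop :=
  trilin t /\
  forall (X : lmodType k) (b : U -> V -> W -> X), trilin b ->
    exists f : T -> X, [/\ lin f, (forall u v w, f (t u v w) = b u v w) &
      forall g : T -> X, lin g -> (forall u v w, g (t u v w) = b u v w) -> g =1 f].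

Record tensor_prod (U V : lmodType k) := TensorProd {
  tp_carrier : lmodType k;
  tp_t : U -> V -> tp_carrier;
  tp_univ : is_tensor tp_t }.

Record tensor_prod3 (U V W : lmodType k) := TensorProd3 {
  tp3_carrier : lmodType k;
  tp3_t : U -> V -> W -> tp3_carrier;
  tp3_univ : is_tensor3 tp3_t }.

(* The linear map T -> X induced by a bilinear map b (the unique linear f with
   f (u (x) v) = b u v; chosen by Hilbert's epsilon, well-defined for bilinear b). *)
Definition tlift (U V T X : lmodType k) (t : U -> V -> T) (b : U -> V -> X) : T -> X :=
  epsilon (inhabits (fun _ : T => (0 : X)))
    (fun f => lin f /\ forall u v, f (t u v) = b u v).

(* product on U (x) V of two (possibly non-unital) algebras:
   (a (x) b)(c (x) d) = ac (x) bd *)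
Definition tmul (U V T : lmodType k) (t : U -> V -> T)
    (mU : U -> U -> U) (mV : V -> V -> V) (x y : T) : T :=
  tlift t (fun a b => tlift t (fun c d => t (mU a c) (mV b d)) y) x.

Definition is_hopf (H : algType k) (T2 : tensor_prod H H) (T3 : tensor_prod3 H H H)
    (D : H -> tp_carrier T2) (eps : H -> k) (S : H -> H) : Prop :=
  let t := tp_t T2 in let t3 := tp3_t T3 in
  [/\ lin D /\ linf eps /\ lin S,
   (* coassociativity (D (x) id) D = (id (x) D) D *)
   (forall h, tlift t (fun a b => tlift t (fun a1 a2 => t3 a1 a2 b) (D a)) (D h) =
              tlift t (fun a b => tlift t (fun b1 b2 => t3 a b1 b2) (D b)) (D h)),
   (forall h, tlift t (fun a b => eps a *: b) (D h) = h) /\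
   (forall h, tlift t (fun a b => eps b *: a) (D h) = h),
   ((forall g h, D (g * h) = tmul t *%R *%R (D g) (D h)) /\ D 1 = t 1 1) /\
   ((forall g h, eps (g * h) = eps g * eps h) /\ eps 1 = 1) &
   (forall h, tlift t (fun a b => S a * b) (D h) = eps h *: 1) /\
   (forall h, tlift t (fun a b => a * S b) (D h) = eps h *: 1)].

Definition left_invariant (H : algType k) (T2 : tensor_prod H H)
    (D : H -> tp_carrier T2) (phi : H -> k) : Prop :=
  [/\ linf phi, exists h, phi h != 0 &
      forall h, tlift (tp_t T2) (fun a b => phi b *: a) (D h) = phi h *: 1].

Definition right_invariant (H : algType k) (T2 : tensor_prod H H)
    (D : H -> tp_carrier T2) (psi : H -> k) : Prop :=
  [/\ linf psi, exists h, psi h != 0 &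
      forall h, tlift (tp_t T2) (fun a b => psi a *: b) (D h) = psi h *: 1].

Definition is_nualg (A : lmodType k) (m : A -> A -> A) : Prop :=
  bilin m /\ forall x y z, m x (m y z) = m (m x y) z.

Definition is_comodule_algebra (H : algType k) (T2 : tensor_prod H H)
    (D : H -> tp_carrier T2) (eps : H -> k)
    (A : lmodType k) (m : A -> A -> A)
    (TA : tensor_prod A H) (TA3 : tensor_prod3 A H H)
    (alpha : A -> tp_carrier TA) : Prop :=
  let t := tp_t TA in let t3 := tp3_t TA3 in
  [/\ is_nualg m, lin alpha,
   (forall x y, alpha (m x y) = tmul t m *%R (alpha x) (alpha y)),
   (* (alpha (x) id) alpha = (id (x) D) alpha *)
   (forall x, tlift t (fun a h => tlift t (fun a' h' => t3 a' h' h) (alpha a)) (alpha x) =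
              tlift t (fun a h => tlift (tp_t T2) (fun h1 h2 => t3 a h1 h2) (D h)) (alpha x)) &
   (forall x, tlift t (fun a h => eps h *: a) (alpha x) = x)].

Definition coinvariant (H : algType k) (A : lmodType k) (TA : tensor_prod A H)
    (alpha : A -> tp_carrier TA) (a : A) : Prop :=
  alpha a = tp_t TA a 1.

Definition subspace (A : lmodType k) (P : A -> Prop) : Prop :=
  P 0 /\ forall c x y, P x -> P y -> P (c *: x + y).

(* Universal balanced bilinear map: for subspaces P, Q of A and a subalgebra S,
   the bilinear, S-balanced map mm : P x Q -> T (with values in the subspace R)
   induces a linear bijection  P (x)_S Q -> R.  (Unfolding of the universal
   property of the balanced tensor product P (x)_S Q.) *)
Definition balanced_iso (A : lmodType k) (m : A -> A -> A)
    (P Q S : A -> Prop) (T : lmodType k) (R : T -> Prop) (mm : A -> A -> T) : Prop :=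
  (forall x y, P x -> Q y -> R (mm x y)) /\
  forall (X : lmodType k) (b : A -> A -> X),
    (forall c x y y', P x -> Q y -> Q y' -> b x (c *: y + y') = c *: b x y + b x y') ->
    (forall c x x' y, P x -> P x' -> Q y -> b (c *: x + x') y = c *: b x y + b x' y) ->
    (forall x s y, P x -> S s -> Q y -> b (m x s) y = b x (m s y)) ->
    exists f : T -> X, [/\ lin f, (forall x y, P x -> Q y -> f (mm x y) = b x y) &
      forall g : T -> X, lin g -> (forall x y, P x -> Q y -> g (mm x y) = b x y) ->
        forall z, R z -> g z = f z].

Definition is_I_galois_object (H : algType k) (T2 : tensor_prod H H)
    (D : H -> tp_carrier T2) (eps : H -> k)
    (A : lmodType k) (m : A -> A -> A)
    (TA : tensor_prod A H) (TA3 : tensor_prod3 A H H)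
    (alpha : A -> tp_carrier TA) (I : Type) (p : I -> A) : Prop :=
  [/\ is_comodule_algebra D eps m TA3 alpha,
   (* bijectivity of the Galois map A (x)_{A^alpha} A -> A (x) H,
      a (x) b |-> (a (x) 1) alpha(b) *)
   balanced_iso m (fun _ => True) (fun _ => True) (coinvariant alpha)
     (fun _ => True) (fun a b => tmul (tp_t TA) m *%R (tp_t TA a 1) (alpha b)),
   (* A^alpha identified with k_I, the p i being its minimal idempotents:
      the p i are nonzero, pairwise orthogonal idempotent coinvariants, and they
      span A^alpha *)
   (forall i, coinvariant alpha (p i) /\ p i != 0),
   (forall i, m (p i) (p i) = p i) /\ (forall i j, i <> j -> m (p i) (p j) = 0) &
   (forall a, coinvariant alpha a -> exists s : seq (k * I),
      a = \sum_(x <- s) x.1 *: p x.2)].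

Definition Aij (A : lmodType k) (m : A -> A -> A) (I : Type) (p : I -> A) (i j : I)
    (a : A) : Prop :=
  exists x, a = m (m (p i) x) (p j).

Definition in_sub_tensor (H : algType k) (A : lmodType k) (TA : tensor_prod A H)
    (P : A -> Prop) (z : tp_carrier TA) : Prop :=
  exists s : seq (A * H), (forall x, x \in s -> P x.1) /\
    z = \sum_(x <- s) tp_t TA x.1 x.2.

(* H-equivariant Morita context {M a b}_{a,b : J} formed by subspaces of the
   comodule algebra (A, alpha) with the multiplication of A (associativity and
   the fact that the multiplications are comodule maps are then inherited from
   A and alpha); strict = all multiplication maps
   M a b (x)_{M b b} M b a -> M a a are isomorphisms. *)
Definition strict_equivariant_morita_context (H : algType k) (A : lmodType k)
    (m : A -> A -> A) (TA : tensor_prod A H) (alpha : A -> tp_carrier TA)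
    (J : Type) (M : J -> J -> A -> Prop) : Prop :=
  [/\ (forall a b, subspace (M a b)),
      (forall a b c x y, M a b x -> M b c y -> M a c (m x y)),
      (forall a b x, M a b x -> @in_sub_tensor H A TA (M a b) (alpha x)) &
      (forall a b, balanced_iso m (M a b) (M b a) (M b b) (M a a) m)].

End Defs.

(* The proof has three parts.
   1. Linear algebra over an arbitrary field: by Zorn's lemma, linear
      functionals separate vectors from subspaces; consequently a family spans
      a space as soon as linear maps out of it are determined on the family
      (used for pure tensors and for the image of the Galois map).
   2. Corners of an algebra: if p_i lies in the span A_ij A_ji, then the
      multiplication A_ij (x)_{A_jj} A_ji -> A_ii is bijective, with inverse
      z |-> sum_e z x_e (x) y_e for p_i = sum_e x_e y_e.
   3. The key step: if 0 <> a in A_ij, pick a functional w with w(a) = 1; the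
      inverse of the Galois map composed with x (x) y |-> w(p_i y p_j) x p_i
      sends alpha(a) to p_i and lands in A_ij A_ji, so p_i is in A_ij A_ji,
      and then also p_j is in A_ji A_ij. *)
From HB Require Import structures.
From mathcomp Require Import all_boot all_order all_algebra.
From mathcomp Require classical_sets.
From Stdlib Require Import Classical ClassicalEpsilon FunctionalExtensionality.
Set Implicit Arguments.
Unset Strict Implicit.
Unset Printing Implicit Defensive.
Import GRing.Theory.
Local Open Scope ring_scope.

Section LinearMaps.
Variable k : fieldType.
Implicit Types U V W : lmodType k.

Lemma lin0 U V (f : U -> V) : lin f -> f 0 = 0.
Proof.
move=> hf; have h := hf 1 0 0; rewrite !scale1r addr0 in h.
by apply: (addrI (f 0)); rewrite addr0 -h.
Qed.

Lemma linZ U V (f : U -> V) : lin f -> forall c x, f (c *: x) = c *: f x.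
Proof. by move=> hf c x; have := hf c x 0; rewrite addr0 (lin0 hf) addr0. Qed.

Lemma linD U V (f : U -> V) : lin f -> forall x y, f (x + y) = f x + f y.
Proof. by move=> hf x y; have := hf 1 x y; rewrite !scale1r. Qed.

Lemma lin_sum U V (f : U -> V) (I : Type) (s : seq I) (F : I -> U) : lin f ->
  f (\sum_(i <- s) F i) = \sum_(i <- s) f (F i).
Proof.
move=> hf; elim: s => [|a s IH]; first by rewrite !big_nil lin0.
by rewrite !big_cons linD // IH.
Qed.

Lemma lin_comp U V W (f : U -> V) (g : V -> W) : lin f -> lin g -> lin (g \o f).
Proof. by move=> hf hg c x y /=; rewrite hf hg. Qed.

Lemma lin_comb U V (f g : U -> V) c : lin f -> lin g -> lin (fun x => c *: f x + g x).
Proof. by move=> hf hg d x y; rewrite hf hg !scalerDr !scalerA mulrC addrACA. Qed.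

Lemma lin_sumf (I : eqType) U V (s : seq I) (F : I -> U -> V) :
  (forall i, i \in s -> lin (F i)) -> lin (fun x => \sum_(i <- s) F i x).
Proof.
move=> hF c x y; elim: s hF => [|a s IH] hF; first by rewrite !big_nil scaler0 addr0.
rewrite !big_cons IH => [|i ins]; last by apply: hF; rewrite inE ins orbT.
by rewrite hF ?inE ?eqxx // scalerDr addrACA.
Qed.

Lemma bilin_comb U V W (F G : U -> V -> W) c : bilin F -> bilin G ->
  bilin (fun u v => c *: F u v + G u v).
Proof.
move=> [F1 F2] [G1 G2]; split => [u|v]; first exact: lin_comb.
exact: (lin_comb c (F2 v) (G2 v)).
Qed.

Lemma subspace_sum U (Q : U -> Prop) (J : eqType) (s : seq J) (F : J -> U) :
  subspace Q -> (forall e, e \in s -> Q (F e)) -> Q (\sum_(e <- s) F e).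
Proof.
move=> [Q0 Ql]; elim: s => [|a s IH] h; first by rewrite big_nil.
rewrite big_cons -[F a]scale1r; apply: Ql; first by apply: h; rewrite inE eqxx.
by apply: IH => e es; apply: h; rewrite inE es orbT.
Qed.

Lemma subspaceZ U (Q : U -> Prop) c x : subspace Q -> Q x -> Q (c *: x).
Proof. by move=> [Q0 Ql] qx; rewrite -[_ *: _]addr0; apply: Ql. Qed.

Lemma lin_on_sum U V (Q : U -> Prop) (f : U -> V) (J : eqType) (s : seq J) (F : J -> U) :
  subspace Q -> (forall c y y', Q y -> Q y' -> f (c *: y + y') = c *: f y + f y') ->
  (forall e, e \in s -> Q (F e)) -> f (\sum_(e <- s) F e) = \sum_(e <- s) f (F e).
Proof.
move=> sQ hf; elim: s => [|a s IH] h.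
  rewrite !big_nil; have := hf 1 0 0 sQ.1 sQ.1; rewrite !scale1r addr0.
  by move=> e; apply: (addrI (f 0)); rewrite addr0 -e.
have hs e : e \in s -> Q (F e) by move=> es; apply: h; rewrite inE es orbT.
have Qa : Q (F a) by apply: h; rewrite inE eqxx.
rewrite !big_cons -IH // -[F a]scale1r hf ?scale1r //; exact: subspace_sum.
Qed.

End LinearMaps.

(* Over an arbitrary
   (infinite-dimensional) vector space this needs Zorn's lemma: a subspace W
   maximal among those containing V and avoiding z is a hyperplane
   complementary to the line k z, and the coordinate along z is the functional. *)
Section Separation.
Variables (k : fieldType) (T : lmodType k).

Lemma maximal_avoiding_subspace (V : T -> Prop) (z : T) : subspace V -> ~ V z ->
  exists W : T -> Prop, [/\ subspace W, (forall v, V v -> W v), ~ W z &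
    forall v, ~ W v -> exists c, exists2 w, W w & z = w + c *: v].
Proof.
move=> [V0 Vl] nVz.
pose VU (B : T -> Prop) x := V x \/ B x.
pose P (B : T -> Prop) := (forall c x y, VU B x -> VU B y -> VU B (c *: x + y)) /\ ~ VU B z.
have [A [[Al Az] Amax]] : exists A, P A /\
    forall B, classical_sets.proper A B -> ~ P B.
  apply: classical_sets.Zorn_bigcup => F FP Ftot.
  pose B := classical_sets.bigcup F id.
  have up X : F X -> forall x, VU X x -> VU B x.
    by move=> FX x [Vx|Xx]; [left|right; exists X].
  split=> [c x y [Vx|[X FX Xx]] [Vy|[Y FY Yy]]|[//|[X FX Xz]]].
  - by left; apply: Vl.
  - by apply: (up Y FY); apply: (FP Y FY).1; [left|right].
  - by apply: (up X FX); apply: (FP X FX).1; [right|left].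
  - have [XY|YX] := Ftot X Y FX FY.
    + by apply: (up Y FY); apply: (FP Y FY).1; right => //; apply: XY.
    + by apply: (up X FX); apply: (FP X FX).1; right => //; apply: YX.
  - by apply: (FP X FX).2; right.
exists (VU A); split=> [|v Vv|//|v nAv]; [by split; [left|] | by left|].
apply: NNPP => nz.
pose B u := exists c, exists2 w, VU A w & u = w + c *: v.
have AB u : VU A u -> B u by move=> Au; exists 0, u; rewrite ?scale0r ?addr0.
have BV x : VU B x -> B x by case=> // Vx; apply: AB; left.
apply: (Amax B); last split.
- split=> [u Au|BA]; first by apply: AB; right.
  by apply: nAv; right; apply: BA; exists 1, 0; rewrite ?scale1r ?add0r //; left.
- move=> d u u' /BV [c1 [w1 Aw1 ->]] /BV [c2 [w2 Aw2 ->]]; right.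
  exists (d * c1 + c2), (d *: w1 + w2); first exact: Al.
  by rewrite scalerDr scalerA scalerDl addrACA.
- by move=> /BV.
Qed.

Lemma hyperplane_coordinate (W : T -> Prop) (z : T) : subspace W -> ~ W z ->
  (forall v, ~ W v -> exists c, exists2 w, W w & z = w + c *: v) ->
  forall v, exists c, W (v - c *: z).
Proof.
move=> [W0 Wl] nWz Wmax v; have [Wv|nWv] := classic (W v).
  by exists 0; rewrite scale0r subr0.
have [c [w Ww ez]] := Wmax v nWv.
have c0 : c != 0 by apply: contra_notN nWz => /eqP c0; rewrite ez c0 scale0r addr0.
exists c^-1; have -> : v - c^-1 *: z = (- c^-1) *: w + 0.
  by rewrite ez scalerDr scalerA mulVf // scale1r addr0 opprD addrCA subrr addr0 scaleNr.
exact: Wl.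
Qed.

Lemma hyperplane_coordinate_unique (W : T -> Prop) (z v : T) (c c' : k) :
  subspace W -> ~ W z -> W (v - c *: z) -> W (v - c' *: z) -> c = c'.
Proof.
move=> [W0 Wl] nWz h1 h2; apply: NNPP => ne; apply: nWz.
suff <- : (c' - c)^-1 *: (v - c *: z) + (- (c' - c)^-1) *: (v - c' *: z) = z.
  by apply: (Wl) => //; rewrite -[X in W X]addr0; apply: Wl.
rewrite scaleNr -scalerBr opprD opprK addrACA subrr add0r addrC -scalerBl.
by rewrite scalerA mulVf ?scale1r // subr_eq0; apply/eqP => e; apply: ne.
Qed.

Lemma functional_sep (V : T -> Prop) (z : T) : subspace V -> ~ V z ->
  exists w : T -> k, [/\ linf w, forall v, V v -> w v = 0 & w z = 1].
Proof.
move=> sV nVz; have [W [sW VW nWz Wmax]] := maximal_avoiding_subspace sV nVz.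
have coord := hyperplane_coordinate sW nWz Wmax.
have uniq := hyperplane_coordinate_unique sW nWz.
pose w v := epsilon (inhabits (0 : k)) (fun c => W (v - c *: z)).
have wP v : W (v - w v *: z) by apply: (epsilon_spec _ (fun c => W (v - c *: z))).
exists w; split => [c x y|v Vv|]; apply: (uniq _ _ _ (wP _)).
- have -> : c *: x + y - (c * w x + w y) *: z = c *: (x - w x *: z) + (y - w y *: z).
    by rewrite scalerDl scalerBr scalerA opprD addrACA.
  by apply: sW.2; apply: wP.
- by rewrite scale0r subr0; apply: VW.
- by rewrite scale1r subrr; exact: sW.1.
Qed.

Lemma span_by_uniqueness (X : Type) (F : X -> T) :
  (forall c x, exists y, F y = c *: F x) ->
  (forall w : T -> k, linf w -> (forall x, w (F x) = 0) -> forall z, w z = 0) ->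
  forall z, exists s : seq X, z = \sum_(x <- s) F x.
Proof.
move=> Fscale Funiq z; apply: NNPP => nz.
pose Q z := exists s : seq X, z = \sum_(x <- s) F x.
have sQ : subspace Q.
  split; first by exists [::]; rewrite big_nil.
  move=> c _ _ [s1 ->] [s2 ->].
  have /choice [g gF] : forall x, exists y, F y = c *: F x by apply: Fscale.
  exists ([seq g x | x <- s1] ++ s2).
  by rewrite big_cat big_map scaler_sumr; congr (_ + _); apply: eq_bigr.
have [w [wl wQ wz]] := functional_sep sQ nz.
have /eqP := Funiq w wl (fun x => wQ _ (ex_intro _ [:: x] (esym (big_seq1 _ _ _)))) z.
by rewrite wz oner_eq0.
Qed.

End Separation.

Section Tensor.
Variables (k : fieldType) (U V T : lmodType k) (t : U -> V -> T).
Hypothesis tT : is_tensor t.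

Lemma t_lin1 v : lin (fun u => t u v). Proof. exact: tT.1.2. Qed.
Lemma t_lin2 u : lin (t u). Proof. exact: tT.1.1. Qed.

Lemma tlift_spec (X : lmodType k) (b : U -> V -> X) : bilin b ->
  lin (tlift t b) /\ forall u v, tlift t b (t u v) = b u v.
Proof.
move=> hb; have [f [hf ft _]] := tT.2 X b hb.
exact: (epsilon_spec (inhabits (fun _ : T => (0 : X)))
    (fun f => lin f /\ forall u v, f (t u v) = b u v) (ex_intro _ f (conj hf ft))).
Qed.

Lemma lin_ext (X : lmodType k) (g1 g2 : T -> X) : lin g1 -> lin g2 ->
  (forall u v, g1 (t u v) = g2 (t u v)) -> g1 =1 g2.
Proof.
move=> h1 h2 e z.
have hb : bilin (fun u v => g1 (t u v)).
  by split=> [u|v]; [exact: lin_comp (t_lin2 u) h1 | exact: lin_comp (t_lin1 v) h1].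
have [f [_ _ funiq]] := tT.2 X _ hb.
by rewrite (funiq g1 h1) // (funiq g2 h2).
Qed.

Lemma tensor_span z : exists s : seq (U * V), z = \sum_(x <- s) t x.1 x.2.
Proof.
apply: span_by_uniqueness => [c [u v]|w wl w0 {}z].
  by exists (c *: u, v); exact: linZ (t_lin1 v) _ _.
apply: (lin_ext (g1 := w : T -> k^o) (g2 := fun _ => 0 : k^o)) => // [c x y|u v].
  by rewrite scaler0 addr0.
exact: (w0 (u, v)).
Qed.

Lemma tlift_comb (X : lmodType k) (F G : U -> V -> X) c : bilin F -> bilin G ->
  forall z, tlift t (fun u v => c *: F u v + G u v) z = c *: tlift t F z + tlift t G z.
Proof.
move=> hF hG; have [l1 s1] := tlift_spec hF; have [l2 s2] := tlift_spec hG.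
have [l3 s3] := tlift_spec (bilin_comb c hF hG).
by apply: lin_ext => // [|u v]; [exact: lin_comb | rewrite s1 s2 s3].
Qed.

End Tensor.

Section TensorMul.
Variables (k : fieldType) (U V T : lmodType k) (t : U -> V -> T).
Hypothesis tT : is_tensor t.
Variables (mU : U -> U -> U) (mV : V -> V -> V).
Hypotheses (hU : bilin mU) (hV : bilin mV).

Let inner a b := fun c d => t (mU a c) (mV b d).

Lemma inner_bilin a b : bilin (inner a b).
Proof.
split => [c|d] e x y; rewrite /inner.
- by rewrite (hV.1 b) (t_lin2 tT).
- by rewrite (hU.1 a) (t_lin1 tT).
Qed.

Lemma outer_bilin y : bilin (fun a b => tlift t (inner a b) y).
Proof.
split => [a|b] c x x'.
- have -> : inner a (c *: x + x') = fun c0 d => c *: inner a x c0 d + inner a x' c0 d.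
    apply: functional_extensionality => c0; apply: functional_extensionality => d.
    by rewrite /inner (hV.2 d) (t_lin2 tT).
  exact: (tlift_comb tT c (inner_bilin a x) (inner_bilin a x')).
- have -> : inner (c *: x + x') b = fun c0 d => c *: inner x b c0 d + inner x' b c0 d.
    apply: functional_extensionality => c0; apply: functional_extensionality => d.
    by rewrite /inner (hU.2 c0) (t_lin1 tT).
  exact: (tlift_comb tT c (inner_bilin x b) (inner_bilin x' b)).
Qed.

Lemma tmul_lin1 y : lin (fun x => tmul t mU mV x y).
Proof. exact: (tlift_spec tT (outer_bilin y)).1. Qed.

Lemma tmul_t1 a b y : tmul t mU mV (t a b) y = tlift t (inner a b) y.
Proof. exact: (tlift_spec tT (outer_bilin y)).2. Qed.

Lemma tmul_tt a b c d : tmul t mU mV (t a b) (t c d) = t (mU a c) (mV b d).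
Proof. by rewrite tmul_t1 (tlift_spec tT (inner_bilin a b)).2. Qed.

Lemma tmul_lin2 x : lin (tmul t mU mV x).
Proof.
have [s ->] := tensor_span tT x.
have -> : tmul t mU mV (\sum_(x <- s) t x.1 x.2) =
          fun y => \sum_(x <- s) tlift t (inner x.1 x.2) y.
  apply: functional_extensionality => y.
  by rewrite (lin_sum _ _ (tmul_lin1 y)); apply: eq_bigr => e _; exact: tmul_t1.
by apply: lin_sumf => e _; exact: (tlift_spec tT (inner_bilin _ _)).1.
Qed.

End TensorMul.

Section Corners.
Variables (k : fieldType) (A : lmodType k) (m : A -> A -> A).
Hypothesis hm : is_nualg m.
Variables (I : Type) (p : I -> A).
Hypothesis pidem : forall i, m (p i) (p i) = p i.

Lemma mA x y z : m x (m y z) = m (m x y) z. Proof. exact: hm.2. Qed.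
Lemma mlinr x : lin (m x). Proof. exact: hm.1.1. Qed.
Lemma mlinl y : lin (fun x => m x y). Proof. exact: hm.1.2. Qed.
Lemma m0r x : m x 0 = 0. Proof. exact: lin0 (mlinr x). Qed.
Lemma m0l y : m 0 y = 0. Proof. exact: lin0 (mlinl y). Qed.
Lemma mZr x c y : m x (c *: y) = c *: m x y. Proof. exact: linZ (mlinr x) _ _. Qed.
Lemma mZl x c y : m (c *: x) y = c *: m x y. Proof. exact: linZ (mlinl y) _ _. Qed.
Lemma msumr x J (s : seq J) F : m x (\sum_(e <- s) F e) = \sum_(e <- s) m x (F e).
Proof. exact: lin_sum (mlinr x). Qed.
Lemma msuml y J (s : seq J) F : m (\sum_(e <- s) F e) y = \sum_(e <- s) m (F e) y.
Proof. exact: lin_sum (mlinl y). Qed.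

Local Notation P := (Aij m p).

Lemma corner_def i j x : P i j (m (m (p i) x) (p j)).
Proof. by exists x. Qed.

Lemma corner_idl i j a : P i j a -> m (p i) a = a.
Proof. by move=> [x ->]; rewrite !mA pidem. Qed.

Lemma corner_idr i j a : P i j a -> m a (p j) = a.
Proof. by move=> [x ->]; rewrite -!mA pidem. Qed.

Lemma corner_mul i j l x y : P i j x -> P j l y -> P i l (m x y).
Proof. by move=> hx hy; exists (m x y); rewrite mA (corner_idl hx) -mA (corner_idr hy). Qed.

Lemma corner_subspace i j : subspace (P i j).
Proof.
split; first by exists 0; rewrite m0r m0l.
by move=> c _ _ [x ->] [y ->]; exists (c *: x + y); rewrite (mlinr _ c) (mlinl _ c).
Qed.

Definition corner_prod i j z := exists s : seq (A * A),
  (forall e, e \in s -> P i j e.1 /\ P j i e.2) /\ z = \sum_(e <- s) m e.1 e.2.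

Lemma corner_prod_single i j x y : P i j x -> P j i y -> corner_prod i j (m x y).
Proof.
by move=> hx hy; exists [:: (x, y)]; rewrite big_seq1; split=> // e; rewrite inE => /eqP ->.
Qed.

Lemma corner_prod_subspace i j : subspace (corner_prod i j).
Proof.
split; first by exists [::]; rewrite big_nil.
move=> c _ _ [s1 [h1 ->]] [s2 [h2 ->]].
exists ([seq (c *: e.1, e.2) | e <- s1] ++ s2); split.
- move=> e; rewrite mem_cat => /orP [/mapP [x xs ->]|]; last exact: h2.
  by have [hx hy] := h1 x xs; split => //; apply: subspaceZ => //; apply: corner_subspace.
- rewrite big_cat big_map scaler_sumr; congr (_ + _).
  by apply: eq_bigr => x _; rewrite mZl.
Qed.

Lemma corner_prod_diag i : corner_prod i i (p i).
Proof. by have := corner_prod_single (corner_def i i (p i)) (corner_def i i (p i)); rewrite !pidem. Qed.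

Lemma corner_prod_nonzero i j : p i != 0 -> corner_prod i j (p i) ->
  exists y, P j i y /\ y != 0.
Proof.
move=> pnz [s [hs ps]]; apply: NNPP => ny; move/eqP: pnz; apply.
rewrite ps big1_seq // => e /andP [_ es]; have [_ hy] := hs e es.
by have [->|ne] := classic (e.2 = 0); [rewrite m0r | case: ny; exists e.2; split => //; apply/eqP].
Qed.

Lemma expand_by_unit i (s : seq (A * A)) z : p i = \sum_(e <- s) m e.1 e.2 ->
  m z (p i) = z -> z = \sum_(e <- s) m (m z e.1) e.2.
Proof.
by move=> ps zp; rewrite -{1}zp ps msumr; apply: eq_bigr => e _; rewrite mA.
Qed.

(* Strictness: if p_i lies in A_ij A_ji, multiplication
   A_ij (x)_{A_jj} A_ji -> A_ii is a bijection; its inverse sends z to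
   sum_e (z x_e) (x) y_e, where p_i = sum_e x_e y_e. *)
Lemma corner_balanced_iso i j : corner_prod i j (p i) ->
  balanced_iso m (P i j) (P j i) (P j j) (P i i) m.
Proof.
move=> [s [hs ps]]; split=> [x y|X b blinr blinl bbal]; first exact: corner_mul.
pose f z := \sum_(e <- s) b (m (m (m (p i) z) (p i)) e.1) e.2.
have inP z e : e \in s -> P i j (m (m (m (p i) z) (p i)) e.1).
  by move=> es; apply: (corner_mul (corner_def _ _ _)); exact: (hs e es).1.
exists f; split.
- apply: lin_sumf => e es c z z'.
  rewrite -(blinl c _ _ _ (inP z _ es) (inP z' _ es) (hs e es).2); congr (b _ _).
  by rewrite (mlinr _ c) (mlinl _ c) (mlinl _ c).
- move=> x y hx hy; have hxy := corner_mul hx hy.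
  rewrite /f (corner_idl hxy) (corner_idr hxy).
  transitivity (\sum_(e <- s) b x (m (m y e.1) e.2)).
    apply: eq_big_seq => e es; rewrite -mA; apply: bbal => //.
      exact: corner_mul hy (hs e es).1.
    exact: (hs e es).2.
  rewrite -(lin_on_sum (corner_subspace j i) (fun c y1 y2 => blinr c x y1 y2 hx)) => [|e es].
    by rewrite -(expand_by_unit ps (corner_idr hy)).
  exact: corner_mul (corner_mul hy (hs e es).1) (hs e es).2.
- move=> g hg gm z hz.
  rewrite {1}(expand_by_unit ps (corner_idr hz)) (lin_sum _ _ hg).
  rewrite /f (corner_idl hz) (corner_idr hz).
  apply: eq_big_seq => e es; apply: gm; last exact: (hs e es).2.
  exact: corner_mul hz (hs e es).1.
Qed.

End Corners.

Section GaloisCorners.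
Variables (k : fieldType) (H : algType k) (A : lmodType k) (m : A -> A -> A).
Hypothesis hm : is_nualg m.
Variables (TA : tensor_prod A H) (alpha : A -> tp_carrier TA) (I : Type) (p : I -> A).
Hypothesis amul : forall x y, alpha (m x y) = tmul (tp_t TA) m *%R (alpha x) (alpha y).
Hypothesis pco : forall i, coinvariant alpha (p i).
Hypothesis pidem : forall i, m (p i) (p i) = p i.
Hypothesis porth : forall i j, i <> j -> m (p i) (p j) = 0.
Hypothesis pspan : forall a, coinvariant alpha a -> exists s : seq (k * I),
  a = \sum_(x <- s) x.1 *: p x.2.
Hypothesis gal : balanced_iso m (fun _ => True) (fun _ => True) (coinvariant alpha)
  (fun _ => True) (fun a b => tmul (tp_t TA) m *%R (tp_t TA a 1) (alpha b)).

Local Notation t := (tp_t TA).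
Local Notation tT := (tp_univ TA).
Local Notation tm := (tmul t m *%R).
Local Notation P := (Aij m p).

Lemma mulH_bilin : bilin ( *%R : H -> H -> H).
Proof.
split => [x|y] c a b /=; first by rewrite mulrDr scalerAr.
by rewrite mulrDl scalerAl.
Qed.

Lemma tm_lin1 y : lin (fun x => tm x y). Proof. exact (tmul_lin1 tT hm.1 mulH_bilin y). Qed.
Lemma tm_lin2 x : lin (tm x). Proof. exact (tmul_lin2 tT hm.1 mulH_bilin x). Qed.
Lemma tm_pure a b c d : tm (t a b) (t c d) = t (m a c) (b * d).
Proof. exact (tmul_tt tT hm.1 mulH_bilin a b c d). Qed.

Definition galois_map x y := tm (t x 1) (alpha y).

Lemma galois_mapZ c x y : galois_map (c *: x) y = c *: galois_map x y.
Proof. by rewrite /galois_map (linZ (t_lin1 tT 1)) (linZ (tm_lin1 _)). Qed.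

Lemma galois_map_mull u x y : tm (t u 1) (galois_map x y) = galois_map (m u x) y.
Proof.
rewrite /galois_map; move: (alpha y) => w.
apply: (lin_ext tT (g1 := fun w => tm (t u 1) (tm (t x 1) w))) => [||c h].
- exact: lin_comp (tm_lin2 _) (tm_lin2 _).
- exact: tm_lin2.
- by rewrite !tm_pure !mul1r (mA hm).
Qed.

Lemma galois_map_span z : exists s : seq (A * A), z = \sum_(e <- s) galois_map e.1 e.2.
Proof.
apply: span_by_uniqueness => [c [x y]|w wl w0 {}z].
  by exists (c *: x, y); exact: galois_mapZ.
have zero_lin (c : k) : (0 : k^o) = c *: 0 + 0 by rewrite scaler0 addr0.
have [f [_ _ funiq]] := gal.2 (k^o) (fun _ _ => 0) (fun c _ _ _ _ _ _ => zero_lin c)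
  (fun c _ _ _ _ _ _ => zero_lin c) (fun _ _ _ _ _ _ => erefl).
rewrite (funiq (w : _ -> k^o) wl) // => [|x y _ _]; last exact: (w0 (x, y)).
by rewrite -(funiq (fun _ => 0 : k^o)) // => c x y; rewrite scaler0 addr0.
Qed.

Lemma idempotent_products i l : exists d : k,
  m (p i) (p l) = d *: p i /\ m (p l) (p i) = d *: p i.
Proof.
have [<-|ne] := classic (i = l); first by exists 1; rewrite pidem scale1r.
by exists 0; rewrite !porth ?scale0r // => e; apply: ne.
Qed.

Lemma coinvariant_scalar s i : coinvariant alpha s -> exists c : k,
  m (p i) s = c *: p i /\ m s (p i) = c *: p i.
Proof.
move=> /pspan [l ->].
have /choice [d hd] : forall e : k * I, exists d : k,
  m (p i) (p e.2) = d *: p i /\ m (p e.2) (p i) = d *: p i.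
  by move=> e; apply: idempotent_products.
exists (\sum_(e <- l) e.1 * d e); rewrite scaler_suml (msumr hm) (msuml hm).
by split; apply: eq_bigr => e _; rewrite ?(mZr hm) ?(mZl hm) ?(hd e).1 ?(hd e).2 scalerA.
Qed.

Lemma alpha_corner i j a : P i j a -> in_sub_tensor (P i j) (alpha a).
Proof.
move=> ha; have [s es] := tensor_span tT (alpha a).
exists [seq (m (m (p i) e.1) (p j), e.2) | e <- s]; split.
  by move=> e /mapP [x _ ->]; exact: corner_def.
rewrite -(corner_idl hm pidem ha) -(corner_idr hm pidem ha) !amul !pco es.
rewrite (lin_sum _ _ (tm_lin1 _)) (lin_sum _ _ (tm_lin2 _)) big_map.
by apply: eq_bigr => e _; rewrite !tm_pure mul1r mulr1 (mA hm).
Qed.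

(* For a functional w, the map x (x) y |-> w(p_i y p_j) x p_i is balanced over
   the coinvariants (they act on p_i by scalars), so it factors through the
   Galois map. *)
Lemma corner_functional_lift i j (w : A -> k) : linf w ->
  exists f : tp_carrier TA -> A, lin f /\
    forall x y, f (galois_map x y) = w (m (m (p i) y) (p j)) *: m x (p i).
Proof.
move=> wl; have wl' : lin (w : A -> k^o) := wl.
pose b x y := w (m (m (p i) y) (p j)) *: m x (p i).
have b_linr c x y y' : True -> True -> True -> b x (c *: y + y') = c *: b x y + b x y'.
  by move=> _ _ _; rewrite /b (mlinr hm) (mlinl hm) wl scalerDl -scalerA.
have b_linl c x x' y : True -> True -> True -> b (c *: x + x') y = c *: b x y + b x' y.
  by move=> _ _ _; rewrite /b (mlinl hm) scalerDr !scalerA mulrC.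
have b_bal x s y : True -> coinvariant alpha s -> True -> b (m x s) y = b x (m s y).
  move=> _ cs _; have [c [e1 e2]] := coinvariant_scalar i cs.
  rewrite /b -(mA hm x s) e2 (mZr hm) (mA hm (p i) s y) e1 (mZl hm) (mZl hm).
  by rewrite (linZ wl') scalerA mulrC.
have [f [fl fg _]] := gal.2 A b b_linr b_linl b_bal.
by exists f; split => // x y; apply: fg.
Qed.

(* A linear map of that shape sends (A_ij (x) H) into A_ij A_ji: write
   u (x) h = (u (x) 1)(p_j (x) h) and p_j (x) h as a sum of Galois images. *)
Lemma lift_in_corner_prod i j (f : tp_carrier TA -> A) : lin f ->
  (forall x y, exists c : k, f (galois_map x y) = c *: m x (p i)) ->
  forall u h, P i j u -> corner_prod m p i j (f (t u h)).
Proof.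
move=> fl fg u h hu; have sJ : subspace (corner_prod m p i j) by exact: corner_prod_subspace.
have -> : t u h = tm (t u 1) (t (p j) h) by rewrite tm_pure mul1r (corner_idr hm pidem hu).
have [s ->] := galois_map_span (t (p j) h).
rewrite (lin_sum _ _ (tm_lin2 _)) (lin_sum _ _ fl); apply: subspace_sum => // e _.
rewrite galois_map_mull; have [c ->] := fg (m u e.1) e.2; apply: subspaceZ => //.
rewrite -(mA hm) -(corner_idr hm pidem hu) -(mA hm) (mA hm (p j)).
by apply: corner_prod_single => //; exact: corner_def.
Qed.

Lemma idempotent_in_corner_prod i j a : P i j a -> a != 0 -> corner_prod m p i j (p i).
Proof.
move=> ha anz.
have s0 : subspace (fun v : A => v = 0) by split => // c x y -> ->; rewrite scaler0 addr0.
have [w [wl _ wa]] := functional_sep s0 (elimN eqP anz).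
have [f [fl fg]] := corner_functional_lift i j wl.
have <- : f (alpha a) = p i.
  rewrite -(corner_idl hm pidem ha) amul pco fg (corner_idl hm pidem ha).
  by rewrite (corner_idr hm pidem ha) wa scale1r pidem.
have [s [sP ->]] := alpha_corner ha.
rewrite (lin_sum _ _ fl); apply: subspace_sum => [|e es]; first exact: corner_prod_subspace.
by apply: lift_in_corner_prod => // [x y|]; [exists (w (m (m (p i) y) (p j))) | apply: sP].
Qed.

Lemma corner_prods_of_nonzero i j a : p i != 0 -> P i j a -> a != 0 ->
  corner_prod m p i j (p i) /\ corner_prod m p j i (p j).
Proof.
move=> pnz ha anz; have Jij := idempotent_in_corner_prod ha anz.
have [y [hy ynz]] := corner_prod_nonzero hm pnz Jij.
by split => //; exact: idempotent_in_corner_prod hy ynz.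
Qed.

End GaloisCorners.

Theorem mainTheorem10 (k : fieldType) (H : algType k)
    (T2 : tensor_prod H H) (T3 : tensor_prod3 H H H)
    (D : H -> tp_carrier T2) (eps : H -> k) (S : H -> H) (phi psi : H -> k)
    (A : lmodType k) (m : A -> A -> A)
    (TA : tensor_prod A H) (TA3 : tensor_prod3 A H H)
    (alpha : A -> tp_carrier TA) (I : Type) (p : I -> A) (i j : I) :
  is_hopf T3 D eps S ->
  left_invariant D phi -> right_invariant D psi ->
  is_I_galois_object D eps m TA3 alpha p ->
  ((forall a, Aij m p i j a -> a = 0) /\ (forall a, Aij m p j i a -> a = 0)) \/
  strict_equivariant_morita_context m alpha
    (fun (a b : bool) => Aij m p (if a then i else j) (if b then i else j)).
Proof.
move=> _ _ _ [[hm _ amul _ _] gal hp [pidem porth] pspan].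
have pco l : coinvariant alpha (p l) := (hp l).1.
have pnz l : p l != 0 := (hp l).2.
have full := corner_prods_of_nonzero hm amul pco pidem porth pspan gal.
have [nz|zero] := classic (exists a, (Aij m p i j a \/ Aij m p j i a) /\ a != 0); last first.
  by left; split => a ha; apply: NNPP => /eqP anz; apply: zero; exists a; auto.
have [Jij Jji] : corner_prod m p i j (p i) /\ corner_prod m p j i (p j).
  by case: nz => a [[ha|ha] anz]; [exact: full ha anz | have [] := full _ _ _ (pnz j) ha anz].
right; split => [a b|a b c x y|a b x|a b].
- exact: corner_subspace.
- exact: corner_mul.
- exact: alpha_corner.
- by apply: corner_balanced_iso => //; case: a; case: b => //; exact: corner_prod_diag.
Qed.
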